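(* Let $g_1,g_2$ be independent exponential random variables with means $\varepsilon_1,\varepsilon_2>0$. Fix rates $R_d>R_s\ge 0$ and $\rho\ge 0$, let $SNR=P_s/\sigma^2$ and $INR=P_d/\sigma^2=SNR^\rho$. Define the events $$E_o^{\mathrm{MF}}=\Big\{\tfrac12\log_2\!\Big(\tfrac12+SNR\tfrac{g_1g_2}{g_1+g_2}\Big)<R_d\Big\},\quad E_o^{\mathrm{cs}}=\Big\{\tfrac12\log_2\!\big(1+\min\{g_1,g_2\}SNR\big)<R_d\Big\},$$ $$E_l=\Big\{\tfrac12\log_2\!\Big(1+\tfrac{g_1\,SNR}{g_2\,INR+1}\Big)>R_d-R_s\Big\},$$ and the total outage probabilities $p_t^{\mathrm{MF}}=\Pr(E_o^{\mathrm{MF}}\cup E_l)$ and $p_t^{\mathrm{cs}}=\Pr(E_o^{\mathrm{cs}}\cup E_l)$. Then $$\limsup_{SNR\to\infty}\frac{-\log p_t^{\mathrm{MF}}}{\log SNR}=\limsup_{SNR\to\infty}\frac{-\log p_t^{\mathrm{cs}}}{\log SNR}=\begin{cases}0,&\rho\le 1,\\ \rho-1,&1<\rho\le 2,\\ 1,&\rho>2.\end{cases}$$ That is, the modulo-and-forward scheme achieves the full generalized secure diversity gain (the one given by the cut-set bound).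
   Context: Untrusted relay channel without channel state information at the transmitter: $h_i\sim\mathcal{CN}(0,\varepsilon_i)$, $g_i=|h_i|^2$ ($g_1$: source–relay, $g_2$: destination–relay and relay–destination). $P_s$ is the source/relay power, $P_d$ the destination's artificial-noise power, $\sigma^2$ the noise variance. $R_d$ is the total (confidential plus randomization) transmission rate and $R_s$ the confidential rate. $E_o^{\mathrm{MF}}$ is connection outage of the modulo-and-forward scheme, $E_o^{\mathrm{cs}}$ is connection outage for the cut-set upper bound on end-to-end capacity (valid for any relay processing), and $E_l$ is secrecy outage at the untrusted relay. The generalized secure diversity gain is $\limsup_{SNR\to\infty}(-\log p_t)/\log SNR$ with $INR=SNR^\rho$. *)

From Stdlib Require Import Reals Lra ClassicalDescription.
Open Scope R_scope.

Definition log2 (x : R) : R := ln x / ln 2.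

Fixpoint rsum (f : nat -> R) (N : nat) : R :=
  match N with
  | O => 0
  | S k => rsum f k + f k
  end.

Definition dy (n i : nat) : R := INR i / 2 ^ n.

(** P(a <= g < b) for g exponential with mean eps. *)
Definition exp_mass (eps a b : R) : R := exp (- a / eps) - exp (- b / eps).

(** Mass of the half-open dyadic cell [i/2^n,(i+1)/2^n) x [j/2^n,(j+1)/2^n)
    under the law of (g1,g2), g1 ~ Exp(mean e1), g2 ~ Exp(mean e2) independent. *)
Definition cell_mass (e1 e2 : R) (n i j : nat) : R :=
  exp_mass e1 (dy n i) (dy n (S i)) * exp_mass e2 (dy n j) (dy n (S j)).

Definition cell_in (A : R -> R -> Prop) (n i j : nat) : Prop :=
  forall x y, dy n i <= x < dy n (S i) -> dy n j <= y < dy n (S j) -> A x y.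

Definition inner_approx (e1 e2 : R) (A : R -> R -> Prop) (n : nat) : R :=
  rsum (fun i => rsum (fun j =>
     if excluded_middle_informative (cell_in A n i j) then cell_mass e1 e2 n i j else 0)
     (n * 2 ^ n)) (n * 2 ^ n).

(** [p] is the probability of the event {(g1,g2) in A}: the supremum of the
    masses of finite unions of dyadic cells contained in A (inner measure).
    For events that are relatively open in [0,oo)^2 (as all events of the
    theorem are) this is exactly the probability Pr((g1,g2) in A). *)
Definition is_prob (e1 e2 : R) (A : R -> R -> Prop) (p : R) : Prop :=
  is_lub (fun r => exists n : nat, r = inner_approx e1 e2 A n) p.

Definition is_limsup_infty (f : R -> R) (L : R) : Prop :=
  (forall e, 0 < e -> exists M, forall s, M < s -> f s < L + e) /\
  (forall e, 0 < e -> forall M, exists s, M < s /\ L - e < f s).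

Definition E_MF (Rd snr : R) (g1 g2 : R) : Prop :=
  / 2 * log2 (/ 2 + snr * (g1 * g2 / (g1 + g2))) < Rd.

Definition E_cs (Rd snr : R) (g1 g2 : R) : Prop :=
  / 2 * log2 (1 + Rmin g1 g2 * snr) < Rd.

Definition E_l (Rd Rs rho snr : R) (g1 g2 : R) : Prop :=
  / 2 * log2 (1 + g1 * snr / (g2 * Rpower snr rho + 1)) > Rd - Rs.

Definition gsdg (rho : R) : R :=
  if Rle_dec rho 1 then 0 else if Rle_dec rho 2 then rho - 1 else 1.

(* Write q = 2^(2 Rd) and a = 2^(2 (Rd - Rs)) - 1, so that the connection outage reads
   roughly min(g1, g2) SNR < q and the secrecy outage g1 SNR > a (g2 INR + 1).
   The union event is squeezed between explicit shapes. It is contained in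
   {g1 < 2q/SNR} u {g2 < 2q/SNR} u {g2 < SNR^(1-rho) g1 / a}, whose mass is
   O(SNR^-1 + SNR^(1-rho)); it contains the strip {g1 < (q-1)/SNR} (connection outage,
   mass of order SNR^-1) and, for a fixed K >= 2a, the rectangle
   {g1 >= K, g2 < min(1, SNR^(1-rho))} (secrecy outage). Hence p_t is of exact order
   SNR^-d with d = min(1, max(0, rho - 1)), and the ratio -log p_t / log SNR tends to d.
   Since probabilities are inner measures over dyadic cells, the lower bounds come from
   single dyadic rectangles and the upper bound from summing cell masses over the cover. *)

From Stdlib Require Import Reals Lra Lia Psatz ClassicalDescription.
Open Scope R_scope.

Lemma rsum_le f g N : (forall i, (i < N)%nat -> f i <= g i) -> rsum f N <= rsum g N.
Proof.
  induction N as [|N IH]; simpl; intros H; [lra|].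
  assert (f N <= g N) by (apply H; lia).
  assert (rsum f N <= rsum g N) by (apply IH; intros; apply H; lia).
  lra.
Qed.

Lemma rsum_nonneg f N : (forall i, (i < N)%nat -> 0 <= f i) -> 0 <= rsum f N.
Proof.
  intros H. replace 0 with (rsum (fun _ => 0) N).
  - apply rsum_le; auto.
  - induction N as [|N IH]; simpl; [reflexivity|]. rewrite IH by (intros; apply H; lia). ring.
Qed.

Lemma rsum_plus f g N : rsum (fun i => f i + g i) N = rsum f N + rsum g N.
Proof. induction N as [|N IH]; simpl; [|rewrite IH]; ring. Qed.

Lemma rsum_scal c f N : rsum (fun i => c * f i) N = c * rsum f N.
Proof. induction N as [|N IH]; simpl; [|rewrite IH]; ring. Qed.

Lemma rsum_le_length f m N : (forall i, 0 <= f i) -> (m <= N)%nat -> rsum f m <= rsum f N.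
Proof.
  intros Hf Hm. induction Hm as [|N _ IH]; simpl; [lra|].
  specialize (Hf N). lra.
Qed.

Lemma rsum_telescope_le f G N :
  (forall i, (i < N)%nat -> f i <= G i - G (S i)) -> rsum f N <= G 0%nat - G N.
Proof.
  induction N as [|N IH]; simpl; intros H; [lra|].
  assert (f N <= G N - G (S N)) by (apply H; lia).
  assert (rsum f N <= G 0%nat - G N) by (apply IH; intros; apply H; lia).
  lra.
Qed.

Lemma rsum_telescope_ge f G s t N : (forall i, 0 <= f i) -> (s <= t <= N)%nat ->
  (forall i, (s <= i < t)%nat -> G i - G (S i) <= f i) -> G s - G t <= rsum f N.
Proof.
  intros Hf [Hst HtN] HG. apply Rle_trans with (rsum f t); [|apply rsum_le_length; auto].
  induction Hst as [|t Hst IH].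
  { pose proof (rsum_nonneg f s (fun i _ => Hf i)). lra. }
  simpl. assert (G t - G (S t) <= f t) by (apply HG; lia).
  assert (G s - G t <= rsum f t) by (apply IH; [lia|intros; apply HG; lia]).
  lra.
Qed.

Lemma pow2_pos n : 0 < 2 ^ n.
Proof. apply pow_lt. lra. Qed.

Lemma inv_pow2_pos n : 0 < / 2 ^ n.
Proof. apply Rinv_0_lt_compat, pow2_pos. Qed.

Lemma inv_pow2_le1 n : / 2 ^ n <= 1.
Proof.
  rewrite <- Rinv_1. apply Rinv_le_contravar; [lra|]. apply pow_R1_Rle. lra.
Qed.

Lemma dy_0 n : dy n 0 = 0.
Proof. unfold dy. simpl. lra. Qed.

Lemma dy_S n i : dy n (S i) = dy n i + / 2 ^ n.
Proof. unfold dy. rewrite S_INR. lra. Qed.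

Lemma dy_1 n : dy n 1 = / 2 ^ n.
Proof. rewrite dy_S, dy_0. ring. Qed.

Lemma dy_nonneg n i : 0 <= dy n i.
Proof. unfold dy. pose proof (pos_INR i). pose proof (inv_pow2_pos n). unfold Rdiv. nra. Qed.

Lemma dy_le n i j : (i <= j)%nat -> dy n i <= dy n j.
Proof.
  intros H. unfold dy, Rdiv. apply Rmult_le_compat_r; [left; apply inv_pow2_pos|].
  apply le_INR; auto.
Qed.

Lemma dy_mul n K : dy n (K * 2 ^ n) = INR K.
Proof.
  unfold dy. rewrite mult_INR, pow_INR. replace (INR 2) with 2 by reflexivity.
  field. apply Rgt_not_eq, pow2_pos.
Qed.

Lemma halving_step t : 0 < t <= 1 -> exists k, t / 2 < / 2 ^ k <= t.
Proof.
  intros Ht.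
  assert (Hm : exists m, / 2 ^ m <= t).
  { destruct (INR_unbounded (/ t)) as [m Hm]. exists m.
    assert (INR m < 2 ^ m).
    { clear. induction m as [|m IH]; [simpl; lra|]. rewrite S_INR; simpl.
      assert (1 <= 2 ^ m) by (apply pow_R1_Rle; lra). lra. }
    rewrite <- (Rinv_inv t). apply Rinv_le_contravar; [apply Rinv_0_lt_compat|]; lra. }
  destruct Hm as [m Hm]. induction m as [|m IH].
  - exists 0%nat. simpl in *. lra.
  - destruct (Rle_dec (/ 2 ^ m) t) as [H|H]; [apply IH, H|].
    exists (S m). split; [|exact Hm]. simpl. rewrite Rinv_mult. lra.
Qed.

Lemma dyadic_between t N0 : 0 < t <= 1 ->
  exists n, (N0 <= n)%nat /\ t / 2 ^ S N0 < / 2 ^ n <= t.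
Proof.
  intros Ht. destruct (halving_step t Ht) as [k Hk].
  exists (k + N0)%nat. split; [lia|].
  rewrite pow_add, Rinv_mult. simpl (2 ^ S N0). unfold Rdiv. rewrite Rinv_mult.
  pose proof (inv_pow2_pos N0). pose proof (inv_pow2_le1 N0). pose proof (inv_pow2_pos k).
  split; nra.
Qed.

Lemma exp_le_mono x y : x <= y -> exp x <= exp y.
Proof. intros [H|H]; [left; apply exp_increasing; auto|subst; lra]. Qed.

Lemma exp_neg_div_le e a b : 0 < e -> a <= b -> exp (- b / e) <= exp (- a / e).
Proof.
  intros He H. apply exp_le_mono. unfold Rdiv.
  apply Rmult_le_compat_r; [left; apply Rinv_0_lt_compat|]; lra.
Qed.

Lemma exp_mass_nonneg e a b : 0 < e -> a <= b -> 0 <= exp_mass e a b.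
Proof. intros He H. unfold exp_mass. pose proof (exp_neg_div_le e a b He H). lra. Qed.

Lemma exp_mass_pos e a b : 0 < e -> a < b -> 0 < exp_mass e a b.
Proof.
  intros He H. unfold exp_mass.
  enough (exp (- b / e) < exp (- a / e)) by lra.
  apply exp_increasing. unfold Rdiv. apply Rmult_lt_compat_r; [apply Rinv_0_lt_compat|]; lra.
Qed.

Lemma exp_mass_le_r e a b b' : 0 < e -> b <= b' -> exp_mass e a b <= exp_mass e a b'.
Proof. intros He H. unfold exp_mass. pose proof (exp_neg_div_le e b b' He H). lra. Qed.

(* From [exp x >= 1 + x]: [1 - exp (-x) >= x / (1 + x)]. *)
Lemma exp_mass_ge_small e v : 0 < e -> 0 <= v <= 1 -> v / (e + 1) <= exp_mass e 0 v.
Proof.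
  intros He Hv. unfold exp_mass.
  replace (- 0 / e) with 0 by (field; lra). rewrite exp_0.
  set (x := v / e).
  assert (Hx : 0 <= x) by (unfold x, Rdiv; pose proof (Rinv_0_lt_compat e He); nra).
  assert (HE : exp (- v / e) * (1 + x) <= 1).
  { replace 1 with (exp (- v / e) * exp x) at 2
      by (rewrite <- exp_plus; unfold x; replace (- v / e + v / e) with 0 by (field; lra);
          apply exp_0).
    apply Rmult_le_compat_l; [left; apply exp_pos|apply exp_ineq1_le]. }
  assert (Hsmall : v / (e + 1) * (1 + x) <= x).
  { unfold x. apply (Rmult_le_reg_r (e * (e + 1))); [nra|].
    replace (v / (e + 1) * (1 + v / e) * (e * (e + 1))) with (v * (e + v)) by (field; lra).
    replace (v / e * (e * (e + 1))) with (v * (e + 1)) by (field; lra). nra. }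
  nra.
Qed.

Definition dyadic_mass (e : R) (n i : nat) : R := exp_mass e (dy n i) (dy n (S i)).

Definition mass_below (e : R) (n : nat) (t : R) (i : nat) : R :=
  if Rle_dec (dy n (S i)) t then dyadic_mass e n i else 0.

Definition cell_term (e1 e2 : R) (A : R -> R -> Prop) (n i j : nat) : R :=
  if excluded_middle_informative (cell_in A n i j) then cell_mass e1 e2 n i j else 0.

Lemma inner_approxE e1 e2 A n :
  inner_approx e1 e2 A n = rsum (fun i => rsum (cell_term e1 e2 A n i) (n * 2 ^ n)) (n * 2 ^ n).
Proof. reflexivity. Qed.

Section DyadicMasses.
Variables (e : R) (n : nat).
Hypothesis He : 0 < e.

Lemma dyadic_mass_nonneg i : 0 <= dyadic_mass e n i.
Proof. apply exp_mass_nonneg; [exact He|]. rewrite dy_S. pose proof (inv_pow2_pos n). lra. Qed.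

Lemma mass_below_nonneg t i : 0 <= mass_below e n t i.
Proof. unfold mass_below. destruct Rle_dec; [apply dyadic_mass_nonneg|lra]. Qed.

Lemma exp_dy_0 : exp (- dy n 0 / e) = 1.
Proof. rewrite dy_0. replace (- 0 / e) with 0 by (field; lra). apply exp_0. Qed.

Lemma dyadic_mass_sum_le1 N : rsum (dyadic_mass e n) N <= 1.
Proof.
  eapply Rle_trans; [apply (rsum_telescope_le _ (fun i => exp (- dy n i / e)))|].
  - intros i _. unfold dyadic_mass, exp_mass. lra.
  - rewrite exp_dy_0. pose proof (exp_pos (- dy n N / e)). lra.
Qed.

Lemma mass_below_sum_le t N : 0 <= t -> rsum (mass_below e n t) N <= t / e.
Proof.
  intros Ht.
  eapply Rle_trans; [apply (rsum_telescope_le _ (fun i => exp (- Rmin (dy n i) t / e)))|].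
  - intros i _. assert (Hle : dy n i <= dy n (S i)) by (apply dy_le; lia).
    unfold mass_below. destruct Rle_dec as [C|C].
    + rewrite !Rmin_left by lra. unfold dyadic_mass, exp_mass. lra.
    + enough (exp (- Rmin (dy n (S i)) t / e) <= exp (- Rmin (dy n i) t / e)) by lra.
      apply exp_neg_div_le; [exact He|]. apply Rle_min_compat_r. exact Hle.
  - rewrite (Rmin_left (dy n 0)), exp_dy_0 by (rewrite dy_0; exact Ht).
    set (u := Rmin (dy n N) t).
    assert (u <= t) by apply Rmin_r.
    pose proof (exp_ineq1_le (- u / e)).
    assert (- u / e >= - t / e) by (unfold Rdiv; apply Rle_ge, Rmult_le_compat_r;
      [left; apply Rinv_0_lt_compat|]; lra).
    replace (t / e) with (- (- t / e)) by (field; lra). lra.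
Qed.

(* Right endpoints overshoot the mean [e] by at most the mesh [/ 2 ^ n <= 1]. *)
Lemma dyadic_mass_mean N : rsum (fun i => dyadic_mass e n i * dy n (S i)) N <= e + 1.
Proof.
  set (h := / 2 ^ n). pose proof (inv_pow2_pos n) as Hh0. pose proof (inv_pow2_le1 n) as Hh1.
  fold h in Hh0, Hh1.
  eapply Rle_trans; [apply (rsum_telescope_le _ (fun i => (dy n i + e + h) * exp (- dy n i / e)))|].
  - intros i _. unfold dyadic_mass, exp_mass. rewrite dy_S. fold h. set (x := dy n i).
    assert (E : exp (- x / e) = exp (- (x + h) / e) * exp (h / e)).
    { rewrite <- exp_plus. f_equal. field. lra. }
    pose proof (exp_ineq1_le (h / e)). pose proof (exp_pos (- (x + h) / e)).
    assert (e * exp (h / e) >= e + h).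
    { replace (e + h) with (e * (1 + h / e)) by (field; lra).
      apply Rle_ge, Rmult_le_compat_l; lra. }
    rewrite E. nra.
  - rewrite exp_dy_0, dy_0. pose proof (dy_nonneg n N). pose proof (exp_pos (- dy n N / e)).
    assert (0 <= (dy n N + e + h) * exp (- dy n N / e)) by (apply Rmult_le_pos; lra).
    lra.
Qed.

End DyadicMasses.

Section Probability.
Variables (e1 e2 : R) (A : R -> R -> Prop) (p : R).
Hypotheses (He1 : 0 < e1) (He2 : 0 < e2) (Hp : is_prob e1 e2 A p).

Lemma cell_term_nonneg n i j : 0 <= cell_term e1 e2 A n i j.
Proof.
  unfold cell_term. destruct excluded_middle_informative; [|lra].
  apply Rmult_le_pos; apply dyadic_mass_nonneg; assumption.
Qed.

Lemma row_term_nonneg n i : 0 <= rsum (cell_term e1 e2 A n i) (n * 2 ^ n).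
Proof. apply rsum_nonneg. intros. apply cell_term_nonneg. Qed.

Lemma prob_ge_rect n a b c d : (a <= b <= n * 2 ^ n)%nat -> (c <= d <= n * 2 ^ n)%nat ->
  (forall x y, dy n a <= x < dy n b -> dy n c <= y < dy n d -> A x y) ->
  exp_mass e1 (dy n a) (dy n b) * exp_mass e2 (dy n c) (dy n d) <= p.
Proof.
  intros Hab Hcd HA. destruct Hp as [Hub _].
  eapply Rle_trans; [|apply Hub; exists n; reflexivity]. rewrite inner_approxE.
  set (M2 := exp_mass e2 (dy n c) (dy n d)).
  replace (exp_mass e1 (dy n a) (dy n b) * M2)
    with (exp (- dy n a / e1) * M2 - exp (- dy n b / e1) * M2) by (unfold exp_mass; ring).
  apply (rsum_telescope_ge _ (fun i => exp (- dy n i / e1) * M2));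
    [intros; apply row_term_nonneg|exact Hab|].
  intros i Hi.
  replace (exp (- dy n i / e1) * M2 - exp (- dy n (S i) / e1) * M2)
    with (dyadic_mass e1 n i * exp (- dy n c / e2) - dyadic_mass e1 n i * exp (- dy n d / e2))
    by (unfold M2, dyadic_mass, exp_mass; ring).
  apply (rsum_telescope_ge _ (fun j => dyadic_mass e1 n i * exp (- dy n j / e2)));
    [intros; apply cell_term_nonneg|exact Hcd|].
  intros j Hj. unfold cell_term. destruct excluded_middle_informative as [C|C].
  - unfold cell_mass, dyadic_mass, exp_mass. right. ring.
  - exfalso. apply C. intros x y Hx Hy. apply HA.
    + pose proof (dy_le n a i ltac:(lia)). pose proof (dy_le n (S i) b ltac:(lia)). lra.
    + pose proof (dy_le n c j ltac:(lia)). pose proof (dy_le n (S j) d ltac:(lia)). lra.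
Qed.

Lemma prob_le1 : p <= 1.
Proof.
  destruct Hp as [_ Hlub]. apply Hlub. intros r [n ->]. rewrite inner_approxE.
  eapply Rle_trans; [|apply (dyadic_mass_sum_le1 e1 n He1 (n * 2 ^ n))].
  apply rsum_le. intros i _.
  eapply Rle_trans; [apply (rsum_le _ (fun j => dyadic_mass e1 n i * dyadic_mass e2 n j))|].
  - intros j _. unfold cell_term. destruct excluded_middle_informative; [right; reflexivity|].
    apply Rmult_le_pos; apply dyadic_mass_nonneg; assumption.
  - rewrite rsum_scal. pose proof (dyadic_mass_nonneg e1 n He1 i).
    pose proof (dyadic_mass_sum_le1 e2 n He2 (n * 2 ^ n)). nra.
Qed.

Section Cover.
Variables (al ga : R).
Hypotheses (Hal : 0 < al) (Hga : 0 <= ga).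
Hypothesis Hcover : forall x y, 0 <= x -> 0 <= y -> A x y -> x < al \/ y < al \/ y < ga * x.

(* The cover is applied at a point of the cell close enough to its upper corner. *)
Lemma cell_corner_cover n i j : cell_in A n i j ->
  dy n (S i) <= al \/ dy n (S j) <= al \/ dy n (S j) <= ga * dy n (S i).
Proof.
  intros C.
  destruct (Rle_dec (dy n (S i)) al) as [H1|H1]; [now left|].
  destruct (Rle_dec (dy n (S j)) al) as [H2|H2]; [now right; left|].
  destruct (Rle_dec (dy n (S j)) (ga * dy n (S i))) as [H3|H3]; [now right; right|].
  exfalso. rewrite !dy_S in *. set (h := / 2 ^ n) in *. pose proof (inv_pow2_pos n) as Hh.
  fold h in Hh. set (b := dy n i + h) in *. set (d := dy n j + h) in *.
  set (del := Rmin (Rmin h (b - al)) (Rmin (d - al) (d - ga * b)) / 2).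
  assert (del <= h / 2 /\ del <= (b - al) / 2 /\ del <= (d - al) / 2
          /\ del <= (d - ga * b) / 2 /\ 0 < del) as (D1 & D2 & D3 & D4 & D5).
  { unfold del, Rmin. repeat destruct Rle_dec; lra. }
  assert (0 <= ga * del) by (apply Rmult_le_pos; lra).
  assert (ga * (b - del) = ga * b - ga * del) by ring.
  pose proof (dy_nonneg n i). pose proof (dy_nonneg n j).
  assert (HA : A (b - del) (d - del)) by (apply C; rewrite dy_S; fold h; unfold b, d; lra).
  destruct (Hcover (b - del) (d - del) ltac:(unfold b; lra) ltac:(unfold d; lra) HA)
    as [K|[K|K]]; lra.
Qed.

Lemma cell_term_le_cover n i j :
  cell_term e1 e2 A n i j <=
  mass_below e1 n al i * dyadic_mass e2 n j + dyadic_mass e1 n i * mass_below e2 n al j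
  + dyadic_mass e1 n i * mass_below e2 n (ga * dy n (S i)) j.
Proof.
  pose proof (dyadic_mass_nonneg e1 n He1 i). pose proof (dyadic_mass_nonneg e2 n He2 j).
  pose proof (mass_below_nonneg e1 n He1 al i). pose proof (mass_below_nonneg e2 n He2 al j).
  pose proof (mass_below_nonneg e2 n He2 (ga * dy n (S i)) j).
  unfold cell_term. destruct excluded_middle_informative as [C|C]; [|nra].
  unfold cell_mass. fold (dyadic_mass e1 n i) (dyadic_mass e2 n j).
  destruct (cell_corner_cover n i j C) as [D|[D|D]]; unfold mass_below in *;
    repeat destruct Rle_dec; try lra; nra.
Qed.

Lemma row_term_le_cover n i :
  rsum (cell_term e1 e2 A n i) (n * 2 ^ n) <=
  mass_below e1 n al i + al / e2 * dyadic_mass e1 n i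
  + ga / e2 * (dyadic_mass e1 n i * dy n (S i)).
Proof.
  set (N := (n * 2 ^ n)%nat).
  eapply Rle_trans; [apply rsum_le; intros j _; apply cell_term_le_cover|].
  rewrite !rsum_plus, !rsum_scal.
  pose proof (dyadic_mass_nonneg e1 n He1 i). pose proof (mass_below_nonneg e1 n He1 al i).
  pose proof (dy_nonneg n (S i)).
  pose proof (dyadic_mass_sum_le1 e2 n He2 N).
  pose proof (mass_below_sum_le e2 n He2 al N ltac:(lra)).
  pose proof (mass_below_sum_le e2 n He2 (ga * dy n (S i)) N ltac:(nra)).
  replace (ga / e2 * (dyadic_mass e1 n i * dy n (S i)))
    with (dyadic_mass e1 n i * (ga * dy n (S i) / e2)) by (field; lra).
  replace (al / e2 * dyadic_mass e1 n i) with (dyadic_mass e1 n i * (al / e2)) by ring.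
  apply Rplus_le_compat; [apply Rplus_le_compat|]; nra.
Qed.

Lemma prob_le_cover : p <= al / e1 + al / e2 + ga * (e1 + 1) / e2.
Proof.
  destruct Hp as [_ Hlub]. apply Hlub. intros r [n ->]. rewrite inner_approxE.
  set (N := (n * 2 ^ n)%nat).
  eapply Rle_trans; [apply rsum_le; intros i _; apply row_term_le_cover|].
  rewrite !rsum_plus, !rsum_scal.
  pose proof (mass_below_sum_le e1 n He1 al N ltac:(lra)).
  pose proof (dyadic_mass_sum_le1 e1 n He1 N).
  pose proof (dyadic_mass_mean e1 n He1 N).
  assert (0 <= al / e2) by (apply Rlt_le, Rdiv_lt_0_compat; lra).
  assert (0 <= ga / e2) by (unfold Rdiv; pose proof (Rinv_0_lt_compat e2 He2); nra).
  replace (ga * (e1 + 1) / e2) with (ga / e2 * (e1 + 1)) by (field; lra).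
  apply Rplus_le_compat; [apply Rplus_le_compat|]; nra.
Qed.

End Cover.

End Probability.

Lemma ln2_pos : 0 < ln 2.
Proof. pose proof ln_lt_2. lra. Qed.

Lemma half_log2_lt_iff z y : / 2 * log2 z < y <-> ln z < 2 * y * ln 2.
Proof.
  pose proof ln2_pos as Hl. unfold log2.
  replace (/ 2 * (ln z / ln 2)) with (ln z / (2 * ln 2)) by (field; lra).
  split; intros H.
  - apply (Rmult_lt_compat_r (2 * ln 2)) in H; [|lra]. field_simplify in H; lra.
  - apply (Rmult_lt_reg_r (2 * ln 2)); [lra|]. field_simplify; lra.
Qed.

Lemma half_log2_gt_iff z y : / 2 * log2 z > y <-> ln z > 2 * y * ln 2.
Proof.
  pose proof ln2_pos as Hl. unfold log2, Rgt.
  replace (/ 2 * (ln z / ln 2)) with (ln z / (2 * ln 2)) by (field; lra).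
  split; intros H.
  - apply (Rmult_lt_compat_r (2 * ln 2)) in H; [|lra]. field_simplify in H; lra.
  - apply (Rmult_lt_reg_r (2 * ln 2)); [lra|]. field_simplify; lra.
Qed.

Lemma ln_lt_iff z w : 0 < z -> ln z < w <-> z < exp w.
Proof.
  intros Hz. split; intros H.
  - rewrite <- (exp_ln z) by exact Hz. apply exp_increasing, H.
  - rewrite <- (ln_exp w). apply ln_increasing; assumption.
Qed.

Lemma ln_gt_iff z w : 0 < z -> ln z > w <-> z > exp w.
Proof.
  intros Hz. unfold Rgt. split; intros H.
  - rewrite <- (exp_ln z) by exact Hz. apply exp_increasing, H.
  - rewrite <- (ln_exp w). apply ln_increasing; [apply exp_pos|exact H].
Qed.

Lemma Rpower_pos s r : 0 < Rpower s r.
Proof. apply exp_pos. Qed.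

Lemma exp_gt1 x : 0 < x -> 1 < exp x.
Proof. intros H. rewrite <- exp_0. apply exp_increasing, H. Qed.

(* The events compare [/ 2 * log2 z] with a rate [R], i.e. [z] with [2 ^ (2 R)]. *)
Definition conn_thr (Rd : R) : R := exp (2 * Rd * ln 2).

Definition leak_thr (Rd Rs : R) : R := exp (2 * (Rd - Rs) * ln 2) - 1.

Lemma conn_thr_gt1 Rd : 0 < Rd -> 1 < conn_thr Rd.
Proof. intros H. apply exp_gt1. pose proof ln2_pos. nra. Qed.

Lemma leak_thr_pos Rd Rs : Rs < Rd -> 0 < leak_thr Rd Rs.
Proof.
  intros H. unfold leak_thr. enough (1 < exp (2 * (Rd - Rs) * ln 2)) by lra.
  apply exp_gt1. pose proof ln2_pos. nra.
Qed.

Lemma harmonic_nonneg x y : 0 <= x -> 0 <= y -> 0 <= x * y / (x + y).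
Proof.
  intros Hx Hy. destruct (Req_dec (x + y) 0) as [E|E].
  - unfold Rdiv. rewrite E, Rinv_0. lra.
  - apply Rmult_le_pos; [nra|]. left. apply Rinv_0_lt_compat. lra.
Qed.

Lemma harmonic_le_l x y : 0 <= x -> 0 <= y -> x * y / (x + y) <= x.
Proof.
  intros Hx Hy. destruct (Req_dec (x + y) 0) as [E|E].
  - unfold Rdiv. rewrite E, Rinv_0. lra.
  - apply (Rmult_le_reg_r (x + y)); [lra|]. field_simplify; [nra|lra].
Qed.

Lemma harmonic_ge x y m : 0 < m -> m <= x -> m <= y -> m / 2 <= x * y / (x + y).
Proof.
  intros Hm Hx Hy. apply (Rmult_le_reg_r (x + y)); [lra|]. field_simplify; [nra|lra].
Qed.

Section Events.
Variables (Rd Rs rho snr : R).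
Hypotheses (Hsnr : 0 < snr) (HRd : Rs < Rd).

Let q := conn_thr Rd.
Let a := leak_thr Rd Rs.
Let jam := Rpower snr rho.

Lemma E_l_iff x y : 0 <= x -> 0 <= y ->
  E_l Rd Rs rho snr x y <-> a * (y * jam + 1) < x * snr.
Proof.
  intros Hx Hy. pose proof (Rpower_pos snr rho) as Hj. fold jam in Hj.
  assert (Hd : 0 < y * jam + 1) by nra.
  unfold E_l. fold jam. rewrite half_log2_gt_iff, ln_gt_iff.
  2:{ apply Rplus_lt_le_0_compat; [lra|].
      apply Rmult_le_pos; [nra|]. left; apply Rinv_0_lt_compat, Hd. }
  unfold a, leak_thr, Rgt. split; intros H.
  - apply (Rmult_lt_compat_r (y * jam + 1)) in H; [|exact Hd]. field_simplify in H; lra.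
  - apply (Rmult_lt_reg_r (y * jam + 1)); [exact Hd|]. field_simplify; lra.
Qed.

Lemma E_l_cover x y : 0 <= x -> 0 <= y -> E_l Rd Rs rho snr x y -> y < snr / (a * jam) * x.
Proof.
  intros Hx Hy H. apply E_l_iff in H; [|assumption..].
  pose proof (Rpower_pos snr rho) as Hj. fold jam in Hj.
  pose proof (leak_thr_pos Rd Rs HRd) as Ha. fold a in Ha.
  apply (Rmult_lt_reg_r (a * jam)); [nra|]. field_simplify; nra.
Qed.

Lemma E_l_of_strong_g1 x y : 1 <= snr -> 2 * a <= x -> 0 <= y -> y * jam < snr ->
  E_l Rd Rs rho snr x y.
Proof.
  intros Hs Hx Hy Hyi. pose proof (leak_thr_pos Rd Rs HRd) as Ha. fold a in Ha.
  apply E_l_iff; [lra|lra|]. nra.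
Qed.

Lemma E_MF_iff x y : 0 <= x -> 0 <= y ->
  E_MF Rd snr x y <-> / 2 + snr * (x * y / (x + y)) < q.
Proof.
  intros Hx Hy. pose proof (harmonic_nonneg x y Hx Hy).
  unfold E_MF. rewrite half_log2_lt_iff, ln_lt_iff by nra. reflexivity.
Qed.

Lemma E_cs_iff x y : 0 <= x -> 0 <= y -> E_cs Rd snr x y <-> 1 + Rmin x y * snr < q.
Proof.
  intros Hx Hy. assert (0 <= Rmin x y) by (apply Rmin_glb; assumption).
  unfold E_cs. rewrite half_log2_lt_iff, ln_lt_iff by nra. reflexivity.
Qed.

Lemma E_MF_cover x y : 0 < Rd -> 0 <= x -> 0 <= y -> E_MF Rd snr x y ->
  x < 2 * q / snr \/ y < 2 * q / snr.
Proof.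
  intros HRd0 Hx Hy H. apply E_MF_iff in H; [|assumption..].
  destruct (Rlt_dec x (2 * q / snr)) as [|Hx']; [now left|].
  destruct (Rlt_dec y (2 * q / snr)) as [|Hy']; [now right|]. exfalso.
  pose proof (conn_thr_gt1 Rd HRd0) as Hq. fold q in Hq.
  assert (Hm : 0 < 2 * q / snr) by (apply Rdiv_lt_0_compat; lra).
  pose proof (harmonic_ge x y _ Hm ltac:(lra) ltac:(lra)).
  assert (snr * (2 * q / snr / 2) <= snr * (x * y / (x + y))) by (apply Rmult_le_compat_l; lra).
  replace (snr * (2 * q / snr / 2)) with q in * by (field; lra). lra.
Qed.

Lemma E_cs_cover x y : 0 < Rd -> 0 <= x -> 0 <= y -> E_cs Rd snr x y ->
  x < 2 * q / snr \/ y < 2 * q / snr.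
Proof.
  intros HRd0 Hx Hy H. apply E_cs_iff in H; [|assumption..].
  pose proof (conn_thr_gt1 Rd HRd0) as Hq. fold q in Hq.
  assert (Rmin x y < 2 * q / snr).
  { apply (Rmult_lt_reg_r snr); [exact Hsnr|]. field_simplify; lra. }
  unfold Rmin in *. destruct Rle_dec; [left|right]; lra.
Qed.

Lemma E_MF_of_weak_g1 x y : 0 <= x -> 0 <= y -> x * snr < q - 1 -> E_MF Rd snr x y.
Proof.
  intros Hx Hy H. apply E_MF_iff; [assumption..|].
  pose proof (harmonic_le_l x y Hx Hy). nra.
Qed.

Lemma E_cs_of_weak_g1 x y : 0 <= x -> 0 <= y -> x * snr < q - 1 -> E_cs Rd snr x y.
Proof.
  intros Hx Hy H. apply E_cs_iff; [assumption..|].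
  assert (0 <= Rmin x y <= x) by (split; [apply Rmin_glb|apply Rmin_l]; assumption). nra.
Qed.
End Events.

Lemma ln_le_mono x y : 0 < x -> x <= y -> ln x <= ln y.
Proof. intros Hx [H|H]; [left; apply ln_increasing; assumption|subst; lra]. Qed.

Lemma log_ratio_bounds (f : R -> R) L c C s : 1 < s -> 0 < c ->
  c * Rpower s (- L) <= f s <= C * Rpower s (- L) ->
  L - ln C / ln s <= - ln (f s) / ln s <= L - ln c / ln s.
Proof.
  intros Hs Hc [Hlo Hhi].
  assert (Hl : 0 < ln s) by (rewrite <- ln_1; apply ln_increasing; lra).
  assert (Hpow : 0 < Rpower s (- L)) by apply exp_pos.
  assert (Hf : 0 < f s) by nra.
  assert (HC : 0 < C) by nra.
  apply ln_le_mono in Hlo; [|nra]. apply ln_le_mono in Hhi; [|exact Hf].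
  rewrite ln_mult, ln_Rpower in Hlo, Hhi by assumption.
  split; apply (Rmult_le_reg_r (ln s)); try exact Hl; field_simplify; nra.
Qed.

Lemma div_ln_lt k e s : 0 < e -> exp (Rabs k / e) < s -> Rabs k / ln s < e.
Proof.
  intros He Hs. pose proof (Rabs_pos k).
  assert (Hk : Rabs k / e < ln s).
  { rewrite <- (ln_exp (Rabs k / e)). apply ln_increasing; [apply exp_pos|exact Hs]. }
  assert (0 <= Rabs k / e) by (apply Rmult_le_pos; [|left; apply Rinv_0_lt_compat]; lra).
  apply (Rmult_lt_reg_r (ln s)); [lra|].
  replace (Rabs k / ln s * ln s) with (e * (Rabs k / e)) by (field; lra).
  apply Rmult_lt_compat_l; assumption.
Qed.

Lemma exists_above a b : exists m, a <= m /\ b <= m.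
Proof. exists (Rmax a b). split; [apply Rmax_l|apply Rmax_r]. Qed.

Lemma limsup_of_power_bounds (f : R -> R) L c C s0 : 0 < c ->
  (forall s, s0 < s -> c * Rpower s (- L) <= f s <= C * Rpower s (- L)) ->
  is_limsup_infty (fun s => - ln (f s) / ln s) L.
Proof.
  intros Hc Hf. destruct (exists_above s0 1) as (s1 & Hs0 & Hs1).
  assert (Hratio : forall s, s1 < s ->
            0 < ln s /\ L - ln C / ln s <= - ln (f s) / ln s <= L - ln c / ln s).
  { intros s Hs. split; [rewrite <- ln_1; apply ln_increasing; lra|].
    apply log_ratio_bounds; [lra|exact Hc|]. apply Hf. lra. }
  split.
  - intros e He. destruct (exists_above s1 (exp (Rabs (ln c) / e))) as (M & HM1 & HM2).
    exists M. intros s Hs. destruct (Hratio s ltac:(lra)) as (Hl & _ & Hup).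
    pose proof (div_ln_lt (ln c) e s He ltac:(lra)).
    assert (- (ln c / ln s) <= Rabs (ln c) / ln s).
    { unfold Rdiv. rewrite Ropp_mult_distr_l. apply Rmult_le_compat_r.
      - left. apply Rinv_0_lt_compat, Hl.
      - rewrite <- Rabs_Ropp. apply Rle_abs. }
    lra.
  - intros e He M. destruct (exists_above M s1) as (m & HM1 & HM2).
    destruct (exists_above m (exp (Rabs (ln C) / e))) as (s' & Hm1 & Hm2).
    exists (s' + 1). split; [lra|].
    destruct (Hratio (s' + 1) ltac:(lra)) as (Hl & Hlo & _).
    pose proof (div_ln_lt (ln C) e (s' + 1) He ltac:(lra)).
    assert (ln C / ln (s' + 1) <= Rabs (ln C) / ln (s' + 1)).
    { unfold Rdiv. apply Rmult_le_compat_r; [left; apply Rinv_0_lt_compat, Hl|apply Rle_abs]. }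
    lra.
Qed.

Lemma level_pos n : (1 <= n)%nat -> (1 <= n * 2 ^ n)%nat.
Proof. intros Hn. pose proof (Nat.pow_nonzero 2 n ltac:(lia)). nia. Qed.

Section PowerLaw.
Variables (e1 e2 q a rho : R) (A : R -> R -> R -> Prop) (p : R -> R).
Hypotheses (He1 : 0 < e1) (He2 : 0 < e2) (Hq : 1 < q) (Ha : 0 < a).
Hypothesis Hp : forall snr, 0 < snr -> is_prob e1 e2 (A snr) (p snr).
Hypothesis HA_cover : forall snr x y, 0 < snr -> 0 <= x -> 0 <= y -> A snr x y ->
  x < 2 * q / snr \/ y < 2 * q / snr \/ y < snr / (a * Rpower snr rho) * x.
Hypothesis HA_weak : forall snr x y, 0 < snr -> 0 <= x -> 0 <= y -> x * snr < q - 1 -> A snr x y.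
Hypothesis HA_strong : forall snr x y, 1 <= snr -> 2 * a <= x -> 0 <= y ->
  y * Rpower snr rho < snr -> A snr x y.

(* The rectangle [K, n) x [0, / 2 ^ n) with [K >= 2 a] lies in the event. *)
Lemma outage_ge_strip : exists c, 0 < c /\ forall snr t, 1 <= snr -> 0 < t <= 1 ->
  t * Rpower snr rho <= snr -> c * t <= p snr.
Proof.
  destruct (INR_unbounded (2 * a)) as [K HK].
  set (c0 := exp_mass e1 (INR K) (INR (K + 1))).
  assert (Hc0 : 0 < c0) by (apply exp_mass_pos; [exact He1|rewrite plus_INR; simpl; lra]).
  exists (c0 / (2 ^ S (K + 1) * (e2 + 1))).
  split; [apply Rdiv_lt_0_compat; [exact Hc0|pose proof (pow2_pos (S (K + 1))); nra]|].
  intros snr t Hs Ht Hts.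
  destruct (dyadic_between t (K + 1) Ht) as (n & Hn & Hlo & Hhi).
  pose proof (inv_pow2_pos n). pose proof (Rpower_pos snr rho).
  assert (Hrect := prob_ge_rect e1 e2 (A snr) (p snr) He1 He2 (Hp snr ltac:(lra)) n
                     (K * 2 ^ n) (n * 2 ^ n) 0 1).
  rewrite !dy_mul, dy_0, dy_1 in Hrect.
  eapply Rle_trans; [|apply Hrect].
  - apply (Rle_trans _ (c0 * (/ 2 ^ n / (e2 + 1)))).
    + unfold Rdiv at 1. rewrite Rinv_mult.
      replace (c0 * (/ 2 ^ S (K + 1) * / (e2 + 1)) * t) with (c0 * (t / 2 ^ S (K + 1) / (e2 + 1)))
        by (field; split; [lra|apply Rgt_not_eq, pow2_pos]).
      apply Rmult_le_compat_l; [lra|]. unfold Rdiv.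
      apply Rmult_le_compat_r; [left; apply Rinv_0_lt_compat; lra|lra].
    + apply Rmult_le_compat; [lra|left; apply Rdiv_lt_0_compat; lra| |].
      * apply exp_mass_le_r; [exact He1|apply le_INR; lia].
      * apply exp_mass_ge_small; [exact He2|split; [lra|apply inv_pow2_le1]].
  - split; [apply Nat.mul_le_mono_r; lia|lia].
  - split; [lia|apply level_pos; lia].
  - intros x y Hx Hy. apply HA_strong; [exact Hs|lra|lra|].
    nra.
Qed.

(* The rectangle [0, / 2 ^ n) x [0, n) with [/ 2 ^ n <= (q - 1) / snr] lies in the event. *)
Lemma outage_ge_inv_snr : exists c, 0 < c /\ forall snr, 1 <= snr -> q - 1 <= snr ->
  c / snr <= p snr.
Proof.
  set (m := exp_mass e2 0 1). assert (Hm : 0 < m) by (apply exp_mass_pos; lra).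
  exists ((q - 1) * m / (2 ^ 2 * (e1 + 1))).
  split; [apply Rdiv_lt_0_compat; [nra|simpl; lra]|].
  intros snr Hs Hsq.
  set (t := (q - 1) / snr).
  assert (Ht : 0 < t <= 1).
  { unfold t. split; [apply Rdiv_lt_0_compat; lra|].
    apply (Rmult_le_reg_r snr); [lra|]. field_simplify; lra. }
  destruct (dyadic_between t 1 Ht) as (n & Hn & Hlo & Hhi).
  pose proof (inv_pow2_pos n).
  assert (Hrect := prob_ge_rect e1 e2 (A snr) (p snr) He1 He2 (Hp snr ltac:(lra)) n
                     0 1 0 (n * 2 ^ n)).
  rewrite !dy_mul, dy_0, dy_1 in Hrect.
  eapply Rle_trans; [|apply Hrect].
  - apply (Rle_trans _ (/ 2 ^ n / (e1 + 1) * m)).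
    + replace ((q - 1) * m / (2 ^ 2 * (e1 + 1)) / snr) with (t / 2 ^ 2 / (e1 + 1) * m)
        by (unfold t; field; lra).
      apply Rmult_le_compat_r; [lra|]. unfold Rdiv.
      apply Rmult_le_compat_r; [left; apply Rinv_0_lt_compat; lra|simpl in *; lra].
    + apply Rmult_le_compat; [left; apply Rdiv_lt_0_compat; lra|lra| |].
      * apply exp_mass_ge_small; [exact He1|split; [lra|apply inv_pow2_le1]].
      * apply exp_mass_le_r; [exact He2|apply (le_INR 1); lia].
  - split; [lia|apply level_pos; lia].
  - split; [lia|].
    pose proof (level_pos n Hn). lia.
  - intros x y Hx Hy. apply HA_weak; [lra|lra|lra|].
    apply (Rlt_le_trans _ (t * snr)); [apply Rmult_lt_compat_r; lra|].
    unfold t. right. field. lra.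
Qed.

Lemma outage_le : exists C, 0 <= C /\ forall snr, 0 < snr ->
  p snr <= C * (/ snr + Rpower snr (1 - rho)).
Proof.
  assert (0 < 2 * q / e1) by (apply Rdiv_lt_0_compat; lra).
  assert (0 < 2 * q / e2) by (apply Rdiv_lt_0_compat; lra).
  assert (0 < (e1 + 1) / (a * e2)) by (apply Rdiv_lt_0_compat; nra).
  exists (2 * q / e1 + 2 * q / e2 + (e1 + 1) / (a * e2)). split; [lra|]. intros snr Hs.
  pose proof (Rpower_pos snr rho).
  assert (Hga : 0 < snr / (a * Rpower snr rho)) by (apply Rdiv_lt_0_compat; nra).
  eapply Rle_trans.
  { apply (prob_le_cover e1 e2 (A snr) (p snr) He1 He2 (Hp snr Hs) (2 * q / snr)
             (snr / (a * Rpower snr rho))); [apply Rdiv_lt_0_compat; lra|lra|].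
    intros x y Hx Hy HA. apply HA_cover; assumption. }
  assert (Hpow : Rpower snr (1 - rho) = snr / Rpower snr rho).
  { unfold Rminus. rewrite Rpower_plus, Rpower_1, Rpower_Ropp by exact Hs. reflexivity. }
  rewrite Hpow.
  assert (0 < / snr) by (apply Rinv_0_lt_compat; lra).
  assert (0 < snr / Rpower snr rho) by (apply Rdiv_lt_0_compat; lra).
  replace (2 * q / snr / e1 + 2 * q / snr / e2 + snr / (a * Rpower snr rho) * (e1 + 1) / e2)
    with ((2 * q / e1 + 2 * q / e2) * / snr + (e1 + 1) / (a * e2) * (snr / Rpower snr rho))
    by (field; repeat split; lra).
  nra.
Qed.

Lemma power_sum_le s L : 1 <= s -> L <= 1 -> L <= rho - 1 ->
  / s + Rpower s (1 - rho) <= 2 * Rpower s (- L).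
Proof.
  intros Hs H1 H2.
  assert (/ s <= Rpower s (- L)).
  { rewrite Rpower_Ropp. apply Rinv_le_contravar; [apply exp_pos|].
    rewrite <- (Rpower_1 s) at 2 by lra. apply Rle_Rpower; lra. }
  pose proof (Rle_Rpower s (1 - rho) (- L) Hs ltac:(lra)).
  lra.
Qed.

Lemma outage_le_power : exists C, forall L s, L <= 1 -> L <= rho - 1 -> 1 <= s ->
  p s <= C * Rpower s (- L).
Proof.
  destruct outage_le as (C & HC & Hup). exists (2 * C). intros L s HL1 HL2 Hs.
  eapply Rle_trans; [apply Hup; lra|]. rewrite (Rmult_comm 2 C), Rmult_assoc.
  apply Rmult_le_compat_l; [exact HC|apply power_sum_le; lra].
Qed.

Theorem outage_diversity : is_limsup_infty (fun snr => - ln (p snr) / ln snr) (gsdg rho).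
Proof.
  destruct outage_ge_strip as (c1 & Hc1 & Hstrip).
  destruct outage_ge_inv_snr as (c2 & Hc2 & Hweak).
  destruct outage_le_power as (C & Hup).
  unfold gsdg. destruct (Rle_dec rho 1) as [H1|H1%Rnot_le_lt];
    [|destruct (Rle_dec rho 2) as [H2|H2%Rnot_le_lt]].
  - apply (limsup_of_power_bounds _ 0 c1 1 1 Hc1). intros s Hs.
    rewrite Ropp_0, Rpower_O, !Rmult_1_r by lra. split.
    + rewrite <- (Rmult_1_r c1). apply Hstrip; [lra|lra|].
      rewrite Rmult_1_l. rewrite <- (Rpower_1 s) at 2 by lra. apply Rle_Rpower; lra.
    + apply (prob_le1 e1 e2 (A s)); [assumption..|]. apply Hp. lra.
  - apply (limsup_of_power_bounds _ (rho - 1) c1 C 1 Hc1). intros s Hs. split.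
    + apply Hstrip; [lra| |].
      * split; [apply exp_pos|]. apply (Rle_trans _ (Rpower s 0)); [apply Rle_Rpower; lra|].
        rewrite Rpower_O; lra.
      * rewrite <- Rpower_plus. replace (- (rho - 1) + rho) with 1 by ring.
        rewrite Rpower_1 by lra. lra.
    + apply Hup; lra.
  - apply (limsup_of_power_bounds _ 1 c2 C (Rmax 1 (q - 1)) Hc2). intros s Hs.
    pose proof (Rmax_l 1 (q - 1)). pose proof (Rmax_r 1 (q - 1)). split.
    + rewrite Rpower_Ropp, Rpower_1 by lra. apply Hweak; lra.
    + apply Hup; lra.
Qed.
End PowerLaw.

Lemma union_outage_diversity e1 e2 Rd Rs rho (E_o : R -> R -> R -> Prop) (pt : R -> R) :
  0 < e1 -> 0 < e2 -> 0 < Rd -> Rs < Rd ->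
  (forall snr x y, 0 < snr -> 0 <= x -> 0 <= y -> E_o snr x y ->
     x < 2 * conn_thr Rd / snr \/ y < 2 * conn_thr Rd / snr) ->
  (forall snr x y, 0 < snr -> 0 <= x -> 0 <= y -> x * snr < conn_thr Rd - 1 -> E_o snr x y) ->
  (forall snr, 0 < snr ->
     is_prob e1 e2 (fun g1 g2 => E_o snr g1 g2 \/ E_l Rd Rs rho snr g1 g2) (pt snr)) ->
  is_limsup_infty (fun snr => - ln (pt snr) / ln snr) (gsdg rho).
Proof.
  intros He1 He2 HRd0 HRd Hcover Hweak Hp.
  apply (outage_diversity e1 e2 (conn_thr Rd) (leak_thr Rd Rs) rho
           (fun snr g1 g2 => E_o snr g1 g2 \/ E_l Rd Rs rho snr g1 g2));
    [assumption|assumption|apply conn_thr_gt1, HRd0|apply leak_thr_pos, HRd|exact Hp| | |].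
  - intros snr x y Hs Hx Hy [H|H].
    + destruct (Hcover snr x y Hs Hx Hy H); auto.
    + right; right. apply E_l_cover; assumption.
  - intros snr x y Hs Hx Hy H. left. apply Hweak; assumption.
  - intros snr x y Hs Hx Hy H. right. apply E_l_of_strong_g1; try assumption; lra.
Qed.

Theorem theorem3 (e1 e2 Rd Rs rho : R) (pMF pcs : R -> R) :
  0 < e1 -> 0 < e2 -> Rs < Rd -> 0 <= Rs -> 0 <= rho ->
  (forall snr, 0 < snr ->
     is_prob e1 e2 (fun g1 g2 => E_MF Rd snr g1 g2 \/ E_l Rd Rs rho snr g1 g2) (pMF snr)) ->
  (forall snr, 0 < snr ->
     is_prob e1 e2 (fun g1 g2 => E_cs Rd snr g1 g2 \/ E_l Rd Rs rho snr g1 g2) (pcs snr)) ->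
  is_limsup_infty (fun snr => - ln (pMF snr) / ln snr) (gsdg rho) /\
  is_limsup_infty (fun snr => - ln (pcs snr) / ln snr) (gsdg rho).
Proof.
  intros He1 He2 HRd HRs _ HMF Hcs. assert (HRd0 : 0 < Rd) by lra.
  split.
  - apply (union_outage_diversity e1 e2 Rd Rs rho (fun snr => E_MF Rd snr)); try assumption.
    + intros snr x y Hs. apply E_MF_cover; assumption.
    + intros snr x y Hs. apply E_MF_of_weak_g1, Hs.
  - apply (union_outage_diversity e1 e2 Rd Rs rho (fun snr => E_cs Rd snr)); try assumption.
    + intros snr x y Hs. apply E_cs_cover; assumption.
    + intros snr x y Hs. apply E_cs_of_weak_g1, Hs.
Qed.
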